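(* Let $\mathsf{S} \subseteq \{0,1\}^n$ be arbitrary and $f: \mathsf{S} \rightarrow \{0,1\}$ a partial Boolean function. Let $b \geq 2$ and $\mathsf{IP} : \{0, 1\}^b \times \{0, 1\}^b \to \{0, 1\}$ the Inner Product function. Then $\mathsf{D}_{\mathrm{cc}}^\rightarrow(f \circ \mathsf{IP})=\Omega(b \cdot \mathsf{D}_{\mathrm{dt}}^\rightarrow(f))$, where the implied constant is absolute.
   Context: $\mathsf{IP}(x_1,\dots,x_b,y_1,\dots,y_b)=\oplus_{i\in[b]}(x_i\wedge y_i)$. The composed (partial) function $f\circ\mathsf{IP}$ has Alice holding $x=(x_1,\dots,x_n)$, Bob holding $y=(y_1,\dots,y_n)$, $x_i,y_i\in\{0,1\}^b$, is defined on those $(x,y)$ with $(\mathsf{IP}(x_1,y_1),\dots,\mathsf{IP}(x_n,y_n))\in\mathsf{S}$, and takes value $f(\mathsf{IP}(x_1,y_1),\dots,\mathsf{IP}(x_n,y_n))$. $\mathsf{D}_{\mathrm{cc}}^\rightarrow(F)$ is the deterministic one-way communication complexity: the minimum, over protocols in which Alice sends a message $m(x)$ and Bob outputs a bit depending on $m(x)$ and $y$ that is correct on all inputs in the domain, of the maximum message length. $\mathsf{D}_{\mathrm{dt}}^\rightarrow(f)$ (non-adaptive decision tree complexity) is the minimum $k$ such that there exist indices $i_1,\dots,i_k\in[n]$ for which, for every assignment $a_{i_1},\dots,a_{i_k}$, $f$ is constant on $\mathsf{S}\cap\{x: x_{i_j}=a_{i_j}\ \forall j\}$. *)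

From mathcomp Require Import all_boot all_order all_algebra.
From mathcomp Require Import boolp.
Set Implicit Arguments. Unset Strict Implicit. Unset Printing Implicit Defensive.

Notation bits m := {ffun 'I_m -> bool}.

Definition IP (b : nat) (x y : bits b) : bool :=
  \big[addb/false]_(i < b) (x i && y i).

(* Alice's / Bob's input for f o IP : x = (x_1,...,x_n), x_i in {0,1}^b. *)
Notation blocks n b := {ffun 'I_n -> bits b}.

Definition ipvec (n b : nat) (x y : blocks n b) : bits n :=
  [ffun i => IP (x i) (y i)].

(* A deterministic one-way protocol for f o IP (partial function on S,
   f is given as a total function whose values off S are irrelevant) with
   maximum message length at most k: Alice sends m(x) (a bit string of length
   <= k), Bob outputs B(m(x), y); correct on all (x,y) in the domain. *)
Definition oneway_protocol_cost_le (n b : nat) (S : {set bits n})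
    (f : bits n -> bool) (k : nat) : Prop :=
  exists (m : blocks n b -> seq bool) (B : seq bool -> blocks n b -> bool),
    (forall x, size (m x) <= k) /\
    (forall x y, ipvec x y \in S -> B (m x) y = f (ipvec x y)).

Lemma oneway_protocol_exists (n b : nat) (S : {set bits n}) (f : bits n -> bool) :
  exists k, `[< oneway_protocol_cost_le b S f k >].
Proof.
exists #|{: blocks n b}|; apply/asboolP.
pose x0 : blocks n b := [ffun _ => [ffun _ => false]].
exists (fun x => nseq (index x (enum {: blocks n b})) true).
exists (fun s y => f (ipvec (nth x0 (enum {: blocks n b}) (size s)) y)).
split=> [x|x y _]; first by rewrite size_nseq ltnW // cardE index_mem mem_enum.
by rewrite size_nseq nth_index ?mem_enum.
Qed.

Definition Dcc_oneway (n b : nat) (S : {set bits n}) (f : bits n -> bool) : nat :=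
  ex_minn (oneway_protocol_exists b S f).

(* Non-adaptive decision tree: indices i_1..i_k such that for every assignment
   a, f is constant on S ∩ {x : x_{i_j} = a_{i_j} for all j}. *)
Definition nonadaptive_dt_cost_le (n : nat) (S : {set bits n})
    (f : bits n -> bool) (k : nat) : Prop :=
  exists I : k.-tuple 'I_n,
    forall a : k.-tuple bool, exists c : bool,
      forall x, x \in S -> (forall j : 'I_k, x (tnth I j) = tnth a j) -> f x = c.

Lemma nonadaptive_dt_exists (n : nat) (S : {set bits n}) (f : bits n -> bool) :
  exists k, `[< nonadaptive_dt_cost_le S f k >].
Proof.
exists n; apply/asboolP; exists (ord_tuple n) => a.
exists (f [ffun i => tnth a i]) => x _ Hx; congr f; apply/ffunP => i.
by rewrite ffunE -Hx tnth_ord_tuple.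
Qed.

Definition Ddt_nonadaptive (n : nat) (S : {set bits n}) (f : bits n -> bool) : nat :=
  ex_minn (nonadaptive_dt_exists S f).

(** Restrict Alice to inputs whose [n]
    blocks are all nonzero, i.e. to words over an alphabet of [q = 2^b - 1]
    letters.  If two such inputs [X], [X'] get the same message then, because
    [IP] on two nonzero blocks can be made to take any pair of values (any
    equal pair if the blocks coincide), Bob can be fooled unless [f] is
    determined on [S] by the coordinates where [X] and [X'] agree; so any two
    inputs sharing a message agree on at least [d = D_dt(f)] coordinates.
    Cross-agreeing families of words of length [n] satisfy
    [|F| |G| (q-1)^(2t) <= q^(2n)] (induction on [n]), so each message is sent
    on at most [q^n / (q-1)^d] inputs and there are at least [(q-1)^d >=
    2^((b-1)d)] messages, whence [(b-1) d <= D_cc] and [b d <= 2 D_cc]. *)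
From mathcomp Require Import all_boot all_order all_algebra.
From mathcomp Require Import zify ring.
From mathcomp Require Import boolp.
Set Implicit Arguments. Unset Strict Implicit. Unset Printing Implicit Defensive.

(* The function [C + m^2 P^2 / C] is convex, hence at most [(m^2 + 1) P] on
   [P <= C <= m^2 P]; [Z] plays the role of [m^2 P^2 / C]. *)
Lemma split_sum_le (m P C X Y Z : nat) :
  P < C -> C <= m ^ 2 * P -> X <= m * P -> Y <= m * P -> Z * C = X * Y ->
  C + X + Y + Z <= m.+1 ^ 2 * P.
Proof.
move=> ltPC leCm leX leY eZ.
rewrite -(@leq_pmul2r C) ?(leq_ltn_trans _ ltPC) //.
have : X * Y <= (m * P) * (m * P) by apply: leq_mul.
have : (C - P) * (m ^ 2 * P - C) >= 0 by [].
nia.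
Qed.

(* Since [u i v i * u j v j = u i v j * u j v i], at most one diagonal product
   can exceed [P]. *)
Lemma sum_mul_sum_le (I : finType) (u v : I -> nat) (P : nat) :
  (forall i j, i != j -> u i * v j <= P) ->
  (forall i, u i * v i <= #|I|.-1 ^ 2 * P) ->
  (\sum_i u i) * (\sum_i v i) <= #|I| ^ 2 * P.
Proof.
move=> off diag; case: (pickP [pred i | P < u i * v i]) => [i0 /= big_i0 | small].
  have cardI : #|I| = #|I|.-1.+1 by rewrite prednK //; apply/card_gt0P; exists i0.
  set m := #|I|.-1 in diag cardI *.
  have sum_off (w : I -> nat) : (forall j, j != i0 -> w j <= P) ->
      \sum_(j | j != i0) w j <= m * P.
    move=> le_w; apply: (@leq_trans (\sum_(j | j != i0) P)); first exact: leq_sum.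
    by rewrite sum_nat_const cardC1.
  rewrite (bigD1 i0) // [X in _ * X](bigD1 i0) //=.
  set U := \sum_(j | j != i0) u j; set V := \sum_(j | j != i0) v j.
  have leX : u i0 * V <= m * P.
    by rewrite big_distrr /=; apply: sum_off => j; rewrite eq_sym; apply: off.
  have leY : v i0 * U <= m * P.
    by rewrite big_distrr /=; apply: sum_off => j ne; rewrite mulnC; apply: off.
  have eZ : U * V * (u i0 * v i0) = u i0 * V * (v i0 * U) by ring.
  rewrite cardI; apply: leq_trans (split_sum_le big_i0 (diag i0) leX leY eZ).
  by apply: eq_leq; ring.
have le_all i j : u i * v j <= P.
  by case: (eqVneq i j) => [<-|/off //]; move: (small i); rewrite leqNgt /= => ->.
rewrite big_distrl expnS expn1 -mulnA -sum_nat_const.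
apply: leq_sum => i _; rewrite big_distrr -sum_nat_const.
exact: leq_sum.
Qed.

Lemma card_le_fibers (A B : finType) (g : A -> B) (W N : nat) :
  (forall e, #|[set x | g x == e]| * W <= N) -> #|A| * W <= #|B| * N.
Proof.
move=> le_fiber; rewrite -sum1_card (partition_big g xpredT) //= big_distrl /=.
apply: (@leq_trans (\sum_(e : B) N)); last by rewrite sum_nat_const.
apply: leq_sum => e _; apply: leq_trans (le_fiber e).
by rewrite sum1_card leq_mul // subset_leq_card //; apply/subsetP => x; rewrite inE.
Qed.

Section AgreeingFamilies.

Variable T : finType.

Definition agreement n (x y : n.-tuple T) : nat := \sum_(i < n) (tnth x i == tnth y i).

Lemma agreement_cons n a b (x y : n.-tuple T) :
  agreement [tuple of a :: x] [tuple of b :: y] = (a == b) + agreement x y.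
Proof.
rewrite /agreement big_ord_recl; congr (_ + _).
by apply: eq_bigr => i _; rewrite !tnthS.
Qed.

Lemma agreementE n (x y : n.-tuple T) :
  agreement x y = #|[set i | tnth x i == tnth y i]|.
Proof.
rewrite /agreement -sum1_card [RHS]big_mkcond; apply: eq_bigr => i _.
by rewrite inE; case: (_ == _).
Qed.

Lemma card_tuple_cons n (F : {set n.+1.-tuple T}) :
  #|F| = \sum_a #|[set x : n.-tuple T | [tuple of a :: x] \in F]|.
Proof.
under [RHS]eq_bigr do rewrite -sum1_card.
rewrite pair_big_dep -sum1_card /=.
rewrite (reindex (fun p : T * n.-tuple T => [tuple of p.1 :: p.2])) /=.
  by apply: eq_bigl => -[a x]; rewrite inE.
exists (fun x : n.+1.-tuple T => (thead x, [tuple of behead x])).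
  by move=> [a x] _; congr pair; apply: val_inj.
by move=> x _; case/tupleP: x => a x; apply: val_inj.
Qed.

Lemma card_cross_agreeing n t (F G : {set n.-tuple T}) :
  (forall x y, x \in F -> y \in G -> t <= agreement x y) ->
  (#|F| * #|T|.-1 ^ t) * (#|G| * #|T|.-1 ^ t) <= (#|T| ^ n) ^ 2.
Proof.
set m := #|T|.-1.
have card_le k (H : {set k.-tuple T}) : #|H| <= #|T| ^ k.
  by rewrite -card_tuple max_card.
elim: n t F G => [|n IH] [|t] F G agreeFG;
  try by rewrite !muln1 -mulnn leq_mul ?card_le.
  have [-> | [x xF]] := set_0Vmem F; first by rewrite cards0.
  have [-> | [y yG]] := set_0Vmem G; first by rewrite cards0 muln0.
  by have := agreeFG x y xF yG; rewrite /agreement big_ord0.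
pose slice (H : {set n.+1.-tuple T}) a := [set x : n.-tuple T | [tuple of a :: x] \in H].
rewrite (card_tuple_cons F) (card_tuple_cons G) [#|T| ^ n.+1]expnS expnMn.
rewrite [_ * m ^ t.+1]big_distrl [_ * m ^ t.+1]big_distrl /=.
apply: sum_mul_sum_le => [a b ne_ab | a].
  apply: IH => x y; rewrite !inE => xF yG.
  by have := agreeFG _ _ xF yG; rewrite agreement_cons (negbTE ne_ab).
have := IH t (slice F a) (slice G a).
set A := #|slice F a| * m ^ t; set B := #|slice G a| * m ^ t => le_AB.
have -> : #|slice F a| * m ^ t.+1 * (#|slice G a| * m ^ t.+1) = m ^ 2 * (A * B).
  by rewrite /A /B !expnS; ring.
rewrite leq_mul2l le_AB ?orbT // => x y; rewrite !inE => xF yG.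
by have := agreeFG _ _ xF yG; rewrite agreement_cons eqxx.
Qed.

Lemma card_agreeing n t (F : {set n.-tuple T}) :
  {in F &, forall x y, t <= agreement x y} -> #|F| * #|T|.-1 ^ t <= #|T| ^ n.
Proof.
by move=> agreeF; rewrite -leq_sqr -mulnn card_cross_agreeing.
Qed.

End AgreeingFamilies.

Notation nonzero_bits b := {x : bits b | x != [ffun=> false]}.

Lemma card_nonzero_bits b : #|{: nonzero_bits b}| = (2 ^ b).-1.
Proof. by rewrite card_sig cardC1 card_ffun card_bool card_ord. Qed.

Definition pair_vec b (p r : 'I_b) (c d : bool) : bits b :=
  [ffun i => ((i == p) && c) (+) ((i == r) && d)].

Lemma IP_pair_vec b (u : bits b) p r c d :
  IP u (pair_vec p r c d) = (u p && c) (+) (u r && d).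
Proof.
have IP_delta (q : 'I_b) e : \big[addb/false]_(i < b) (u i && ((i == q) && e)) = u q && e.
  by rewrite (bigD1 q) //= eqxx big1 ?addbF // => i /negbTE ->; rewrite andbF.
rewrite /IP -!IP_delta -big_split /=; apply: eq_bigr => i _.
by rewrite ffunE; case: (u i).
Qed.

(* Two nonzero vectors of GF(2)^b are linearly independent unless equal, so
   [w |-> (IP u w, IP v w)] hits every pair allowed by [u = v -> c = d]. *)
Lemma IP_solvable b (u v : bits b) (c d : bool) :
  u != [ffun=> false] -> v != [ffun=> false] -> (u = v -> c = d) ->
  exists w, IP u w = c /\ IP v w = d.
Proof.
have support (x : bits b) : x != [ffun=> false] -> exists j, x j.
  move=> nz_x; apply/existsP; apply: contraR nz_x => /existsPn x0.
  by apply/eqP/ffunP => j; rewrite ffunE; exact/negbTE/x0.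
move=> /support[j uj] /support[l vl].
have [eq_uv /(_ eq_uv) <- | ne_uv _] := eqVneq u v.
  by exists (pair_vec j j c false); rewrite -eq_uv IP_pair_vec uj andbF addbF.
have [p] : exists p, u p != v p.
  apply/existsP; apply: contraR ne_uv => /existsPn eq_uv.
  by apply/eqP/ffunP => p; exact/eqP/negbNE/eq_uv.
case up: (u p); case vp: (v p) => // _.
  exists (pair_vec p l (c (+) (u l && d)) d); rewrite !IP_pair_vec up vp vl.
  by case: c; case: d; case: (u l).
exists (pair_vec p j (d (+) (v j && c)) c); rewrite !IP_pair_vec up vp uj.
by case: c; case: d; case: (v j).
Qed.

Lemma ipvec_solvable n b (X X' : blocks n b) (z z' : bits n) :
  (forall i, X i != [ffun=> false]) -> (forall i, X' i != [ffun=> false]) ->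
  (forall i, X i = X' i -> z i = z' i) ->
  exists y, ipvec X y = z /\ ipvec X' y = z'.
Proof.
move=> nzX nzX' agree.
have [w solves] := fin_all_exists (fun i => IP_solvable (nzX i) (nzX' i) (agree i)).
by exists [ffun i => w i]; split; apply/ffunP => i; rewrite !ffunE; case: (solves i).
Qed.

Lemma nonadaptive_dt_cost_le_card n (S : {set bits n}) (f : bits n -> bool)
    (E : {set 'I_n}) :
  (forall z z', z \in S -> z' \in S -> {in E, forall i, z i = z' i} -> f z = f z') ->
  nonadaptive_dt_cost_le S f #|E|.
Proof.
move=> determined; exists (enum_tuple (mem E)) => a.
set I := enum_tuple (mem E).
case: (pickP [pred z | (z \in S) && [forall j, z (tnth I j) == tnth a j]]) =>
    [z0 /andP[z0S /forallP z0a] | none]; last first.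
  exists false => z zS za; move: (none z); rewrite /= zS.
  by have -> : [forall j, z (tnth I j) == tnth a j] by apply/forallP => j; rewrite za.
exists (f z0) => z zS za; apply: determined => // i iE.
have /tnthP[j ->] : i \in I by rewrite mem_enum.
by rewrite za; apply/esym/eqP.
Qed.

Lemma same_message_dt_cost n b (S : {set bits n}) (f : bits n -> bool)
    (m : blocks n b -> seq bool) (B : seq bool -> blocks n b -> bool)
    (X X' : blocks n b) :
  (forall x y, ipvec x y \in S -> B (m x) y = f (ipvec x y)) ->
  (forall i, X i != [ffun=> false]) -> (forall i, X' i != [ffun=> false]) ->
  m X = m X' -> nonadaptive_dt_cost_le S f #|[set i | X i == X' i]|.
Proof.
move=> correct nzX nzX' eq_m.
apply: nonadaptive_dt_cost_le_card => z z' zS z'S agreeE.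
have [y [eqz eqz']] : exists y, ipvec X y = z /\ ipvec X' y = z'.
  by apply: ipvec_solvable => // i eqX; apply: agreeE; rewrite inE eqX.
by rewrite -eqz -eqz' -correct ?eqz // eq_m correct ?eqz'.
Qed.

Lemma Dcc_oneway_spec n b (S : {set bits n}) (f : bits n -> bool) :
  oneway_protocol_cost_le b S f (Dcc_oneway b S f).
Proof. by rewrite /Dcc_oneway; case: ex_minnP => k /asboolP. Qed.

Lemma Ddt_nonadaptive_min n (S : {set bits n}) (f : bits n -> bool) k :
  nonadaptive_dt_cost_le S f k -> Ddt_nonadaptive S f <= k.
Proof.
by move=> cost; rewrite /Ddt_nonadaptive; case: ex_minnP => d _; apply; apply/asboolP.
Qed.

Lemma card_bseq_bool k : #|{: k.-bseq bool}| < 2 ^ k.+1.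
Proof.
rewrite card_bseq card_bool; elim: k => [|k IH]; first by rewrite big_ord1.
by rewrite big_ord_recr /= [2 ^ k.+2]expnS mul2n -addnn ltn_add2r.
Qed.

Lemma exp_Ddt_lt_exp_Dcc n b (S : {set bits n}) (f : bits n -> bool) :
  0 < b -> (2 ^ b).-2 ^ Ddt_nonadaptive S f < 2 ^ (Dcc_oneway b S f).+1.
Proof.
move=> b_gt0; have [m [B [size_m correct]]] := Dcc_oneway_spec b S f.
set k := Dcc_oneway b S f in size_m correct *; set d := Ddt_nonadaptive S f.
pose blocks_of (x : n.-tuple (nonzero_bits b)) : blocks n b := [ffun i => val (tnth x i)].
pose msg x : k.-bseq bool := Bseq (size_m (blocks_of x)).
have nz_blocks x i : blocks_of x i != [ffun=> false].
  by rewrite ffunE; exact: (valP (tnth x i)).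
have same_msg_agree (s : k.-bseq bool) :
    {in [set x | msg x == s] &, forall x x', d <= agreement x x'}.
  move=> x x'; rewrite !inE => /eqP mx /eqP mx'.
  have eq_m : m (blocks_of x) = m (blocks_of x').
    by rewrite -[LHS]/(val (msg x)) mx -mx'.
  have := same_message_dt_cost correct (nz_blocks x) (nz_blocks x') eq_m.
  move/Ddt_nonadaptive_min/leq_trans; apply; rewrite agreementE.
  by apply/eq_leq/eq_card => i; rewrite !inE !ffunE val_eqE.
have := card_le_fibers (fun s => card_agreeing (same_msg_agree s)).
rewrite card_tuple card_nonzero_bits mulnC leq_pmul2r => [le_msg|].
  exact: leq_ltn_trans le_msg (card_bseq_bool k).
by rewrite expn_gt0 -subn1 subn_gt0 -{1}(expn0 2) ltn_exp2l // b_gt0.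
Qed.

Lemma exp2_pred_le b : 1 < b -> 2 ^ b.-1 <= (2 ^ b).-2.
Proof.
move=> b_gt1; have two_pow : 2 ^ b = 2 * 2 ^ b.-1 by rewrite -expnS prednK // ltnW.
have : 2 ^ 1 <= 2 ^ b.-1 by rewrite leq_pexp2l // -ltnS prednK // ltnW.
by rewrite two_pow; lia.
Qed.

Lemma Ddt_le_Dcc n b (S : {set bits n}) (f : bits n -> bool) :
  2 <= b -> b * Ddt_nonadaptive S f <= 2 * Dcc_oneway b S f.
Proof.
move=> b_ge2; have := exp_Ddt_lt_exp_Dcc S f (ltnW b_ge2).
set k := Dcc_oneway b S f; set d := Ddt_nonadaptive S f => lt_msg.
have [-> | d_gt0] := posnP d; first by rewrite muln0.
have : 2 ^ (b.-1 * d) < 2 ^ k.+1.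
  by apply: leq_ltn_trans lt_msg; rewrite expnM leq_exp2r // exp2_pred_le.
by rewrite ltn_exp2l // ltnS; nia.
Qed.

Import Order.TTheory GRing.Theory Num.Theory.
Local Open Scope ring_scope.

Theorem theorem1p2 :
  exists c : rat, 0 < c /\
    forall (n b : nat) (S : {set bits n}) (f : bits n -> bool),
      (2 <= b)%N ->
      c * ((b * Ddt_nonadaptive S f)%N)%:R <= ((Dcc_oneway b S f)%N)%:R.
Proof.
exists 2^-1; split=> // n b S f b_ge2.
by rewrite ler_pdivrMl // -natrM ler_nat Ddt_le_Dcc.
Qed.
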